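(* Let $(X,\mathcal{T})$ be a finite topological space. Then the consistency filtration $(\mathcal{S},a)\mapsto\mathbf{CF}(\mathcal{S},a)$ is a continuous function from $\mathbf{ShvPA}(X,\mathcal{T})$ to the objects of $\mathbf{CoarseFilt}$ equipped with the interleaving distance.
   Context: A sheaf $\mathcal{S}$ of pseudometric spaces on $(X,\mathcal{T})$ is a sheaf of sets with a pseudometric $d_U$ on each $\mathcal{S}(U)$ such that all restriction maps are continuous. An assignment is any $a\in\prod_{U\in\mathcal{T}}\mathcal{S}(U)$; the assignment pseudometric is $D(a,b)=\sup_U d_U(a(U),b(U))$. For open $U$, the local consistency radius is $c_{\mathcal{S}}(a,U)=\sup_{V_1\subseteq V_2\subseteq U,\,V_i\in\mathcal{T}} d_{V_1}\big(\mathcal{S}(V_1\subseteq V_2)(a(V_2)),a(V_1)\big)$. For $\epsilon\in\mathbb{R}$, $\mathcal{M}_{\mathcal{S},a}(\epsilon)$ is the collection of open sets $U$ with $c_{\mathcal{S}}(a,U)<\epsilon$ that are maximal under inclusion among such sets, and $\mathbf{CF}(\mathcal{S},a)=(X,\mathcal{T},\epsilon\mapsto\mathcal{M}_{\mathcal{S},a}(\epsilon))$. Topology on $\mathbf{ShvPA}(X,\mathcal{T})$ (the set of pairs $(\mathcal{S},a)$): partition pairs by the isomorphism class of the underlying sheaf; in a class with fixed representative $\mathcal{S}$, every sheaf in the class is regarded as having the same stalks $\mathcal{S}(U)$ but possibly different restriction maps, so the class is identified with a subset of $\prod_{U\subseteq V\in\mathcal{T}}C(\mathcal{S}(V),\mathcal{S}(U))\times\prod_{U\in\mathcal{T}}\mathcal{S}(U)$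 with the subspace topology, each $C(\mathcal{S}(V),\mathcal{S}(U))$ having the topology of uniform convergence and $\prod_U\mathcal{S}(U)$ the topology of the assignment pseudometric; $\mathbf{ShvPA}(X,\mathcal{T})$ is the disjoint union of the classes. A collection $\mathcal{V}$ refines $\mathcal{U}$ if each member of $\mathcal{V}$ lies in some member of $\mathcal{U}$. $\mathbf{CoarseFilt}$: objects are triples $(X,\mathcal{T},\mathbf{V})$, $\mathbf{V}:\mathbb{R}\to2^{\mathcal{T}}$ with $\mathbf{V}(t)$ refining $\mathbf{V}(t')$ for $t\le t'$; a morphism $(X,\mathcal{T},\mathbf{V})\to(Y,\mathcal{S},\mathbf{U})$ is an order-preserving $\phi:\mathbb{R}\to\mathbb{R}$ and continuous maps $f_t:X\to Y$ such that $\mathbf{V}(s)$ refines $f_t^{-1}(\mathbf{U}(t))$ for all $t$ and all $s\in\phi^{-1}(t)$. A pair of morphisms $(X,\mathcal{T},\mathbf{V})\to(Y,\mathcal{S},\mathbf{U})$ along $\phi$ and $(Y,\mathcal{S},\mathbf{U})\to(X,\mathcal{T},\mathbf{V})$ along $\psi$ is an $\epsilon$-interleaving if for all $t$: $|\phi(t)-t|<\epsilon$, $|\psi(t)-t|<\epsilon$, $\mathbf{V}(\inf(\psi\circ\phi)^{-1}(t))$ refines $\mathbf{V}(t)$, and $\mathbf{U}(\inf(\phi\circ\psi)^{-1}(t))$ refines $\mathbf{U}(t)$. The interleaving distance between two objects is the infimum of all $\epsilon$ for which an $\epsilon$-interleaving between them exists. *)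

From HB Require Import structures.
From mathcomp Require Import all_boot all_order all_algebra.
From mathcomp Require Import reals constructive_ereal ereal.
Set Implicit Arguments.
Unset Strict Implicit.
Unset Printing Implicit Defensive.
Import Order.TTheory GRing.Theory Num.Theory.
Local Open Scope ring_scope.

Definition is_topology (X : finType) (T : {set {set X}}) : Prop :=
  [/\ set0 \in T, setT \in T,
      (forall U V, U \in T -> V \in T -> U :|: V \in T) &
      (forall U V, U \in T -> V \in T -> U :&: V \in T)].

Definition opens (X : finType) (T : {set {set X}}) := {U : {set X} | U \in T}.

Definition top_continuous (X Y : finType) (TX : {set {set X}})
  (TY : {set {set Y}}) (f : X -> Y) : Prop :=
  forall W, W \in TY -> f @^-1: W \in TX.

Definition is_pseudometric (R : realType) (A : Type) (d : A -> A -> R) : Prop :=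
  [/\ (forall x, d x x = 0), (forall x y, d x y = d y x) &
      (forall x y z, d x z <= d x y + d y z)].

Definition pm_continuous (R : realType) (A B : Type) (dA : A -> A -> R)
  (dB : B -> B -> R) (f : A -> B) : Prop :=
  forall x (e : R), 0 < e -> exists2 del : R, 0 < del &
    forall y, dA x y < del -> dB (f x) (f y) < e.

(* The stalks [S U] with pseudometrics
   [d U] are fixed; a sheaf structure on them is a family of restriction
   maps [rho U V : S V -> S U]; only its values for [U \subset V] matter
   (the other values are unconstrained junk and never used). *)
Definition restr_maps (X : finType) (T : {set {set X}}) (S : opens T -> Type) :=
  forall U V : opens T, S V -> S U.

Definition is_sheaf_pm (R : realType) (X : finType) (T : {set {set X}})
  (S : opens T -> Type) (d : forall U, S U -> S U -> R)
  (rho : restr_maps S) : Prop :=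
  [/\
      (forall U (x : S U), rho U U x = x),
      (forall U V W : opens T, val U \subset val V -> val V \subset val W ->
         forall x : S W, rho U V (rho V W x) = rho U W x),
      (forall U V : opens T, val U \subset val V ->
         pm_continuous (d V) (d U) (rho U V)) &
      (forall (U : opens T) (C : {set opens T}),
         \bigcup_(W in C) val W = val U ->
         forall s : forall W : opens T, W \in C -> S W,
           (forall i j (hi : i \in C) (hj : j \in C) (W : opens T),
              val W = val i :&: val j -> rho W i (s i hi) = rho W j (s j hj)) ->
           exists! x : S U, forall i (hi : i \in C), rho i U x = s i hi)].

(* isomorphism of the underlying sheaves of sets (stalks fixed) *)
Definition sheaf_iso (X : finType) (T : {set {set X}}) (S : opens T -> Type)
  (rho rho' : restr_maps S) : Prop :=
  exists h : forall U, S U -> S U,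
    (forall U, bijective (h U)) /\
    (forall U V : opens T, val U \subset val V ->
       forall x : S V, h U (rho U V x) = rho' U V (h V x)).

(* assignments and the assignment pseudometric (max = sup, T finite) *)
Definition assignment (X : finType) (T : {set {set X}}) (S : opens T -> Type) :=
  forall U : opens T, S U.

Definition assign_dist (R : realType) (X : finType) (T : {set {set X}})
  (S : opens T -> Type) (d : forall U, S U -> S U -> R)
  (a b : assignment S) : R :=
  \big[Num.max/0]_(U : opens T) d U (a U) (b U).

(* local consistency radius (sup over a finite nonempty family of
   nonnegative numbers, written as a max) *)
Definition cons_radius (R : realType) (X : finType) (T : {set {set X}})
  (S : opens T -> Type) (d : forall U, S U -> S U -> R)
  (rho : restr_maps S) (a : assignment S) (U : opens T) : R :=
  \big[Num.max/0]_(p : opens T * opens T |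
                     (val p.1 \subset val p.2) && (val p.2 \subset val U))
     d p.1 (rho p.1 p.2 (a p.2)) (a p.1).

Definition cf_M (R : realType) (X : finType) (T : {set {set X}})
  (S : opens T -> Type) (d : forall U, S U -> S U -> R)
  (rho : restr_maps S) (a : assignment S) (eps : R) : {set {set X}} :=
  (fun W : opens T => val W) @:
    [set W : opens T | (cons_radius d rho a W < eps) &&
       [forall W' : opens T,
          ((val W \subset val W') && (cons_radius d rho a W' < eps))
            ==> (val W' == val W)]].

Definition refines (X : finType) (A B : {set {set X}}) : Prop :=
  forall V, V \in A -> exists2 U, U \in B & V \subset U.

Definition is_coarse_filt (R : realType) (X : finType) (T : {set {set X}})
  (V : R -> {set {set X}}) : Prop :=
  (forall t, V t \subset T) /\
  (forall t t', t <= t' -> refines (V t) (V t')).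

Definition cf_morphism (R : realType) (X Y : finType) (TX : {set {set X}})
  (TY : {set {set Y}}) (V : R -> {set {set X}}) (U : R -> {set {set Y}})
  (phi : R -> R) (f : R -> X -> Y) : Prop :=
  [/\ {homo phi : s t / s <= t},
      (forall t, top_continuous TX TY (f t)) &
      (forall t s, phi s = t ->
         refines (V s) ((fun W : {set Y} => f t @^-1: W) @: U t))].

Definition is_inf (R : realType) (E : R -> Prop) (s : R) : Prop :=
  (forall x, E x -> s <= x) /\
  (forall b, (forall x, E x -> b <= x) -> b <= s).

Definition cf_interleaving (R : realType) (X Y : finType) (TX : {set {set X}})
  (TY : {set {set Y}}) (V : R -> {set {set X}}) (U : R -> {set {set Y}})
  (eps : R) : Prop :=
  exists (phi : R -> R) (f : R -> X -> Y) (psi : R -> R) (g : R -> Y -> X),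
  [/\ cf_morphism TX TY V U phi f, cf_morphism TY TX U V psi g,
      (forall t, `|phi t - t| < eps /\ `|psi t - t| < eps),
      (forall t, exists2 s, is_inf (fun x => psi (phi x) = t) s &
                             refines (V s) (V t)) &
      (forall t, exists2 s, is_inf (fun x => phi (psi x) = t) s &
                             refines (U s) (U t))].

(* interleaving distance, in the extended reals (+oo if no interleaving) *)
Definition interleaving_dist (R : realType) (X Y : finType)
  (TX : {set {set X}}) (TY : {set {set Y}}) (V : R -> {set {set X}})
  (U : R -> {set {set Y}}) : \bar R :=
  ereal_inf (fun x : \bar R =>
    exists2 e : R, cf_interleaving TX TY V U e & x = (e%:E)%E).

From HB Require Import structures.
From mathcomp Require Import all_boot all_order all_algebra.
From mathcomp Require Import reals constructive_ereal ereal.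
From mathcomp Require Import boolp lra.
Import Order.TTheory GRing.Theory Num.Theory.
Local Open Scope ring_scope.

(* Perturbing the restriction maps and the assignment by less than del moves
   each restriction discrepancy d (rho (a V2)) (a V1) by less than 2 del + eta,
   where eta bounds how far rho moves a V2 to a' V2; as T is finite, continuity
   of the finitely many restriction maps at a makes eta small together with
   del.  The consistency radii, maxima of these discrepancies, then move by at
   most c := 2 del + eta, so an open of radius < s for one pair has radius
   < s + c for the other and lies in a maximal such open: the identity of X
   with the shift t |-> t + c is an e-interleaving for every e > c. *)

Lemma pseudometric_le_shift {R : realType} {A : Type} {d : A -> A -> R} :
  is_pseudometric d -> forall x y x' y', d x y <= d x' y' + (d x x' + d y y').
Proof.
case=> _ dC dtr x y x' y'.
have := dtr x x' y; have := dtr x' y' y; rewrite (dC y' y); lra.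
Qed.

Lemma common_positive_bound (R : realType) (I : finType) (P : I -> R -> Prop) :
  (forall i, exists2 r, 0 < r & forall s, 0 < s -> s <= r -> P i s) ->
  exists2 r, 0 < r & forall i, P i r.
Proof.
move=> hP; have /choice[r hr] : forall i, exists r, 0 < r /\
    forall s, 0 < s -> s <= r -> P i s.
  by move=> i; have [r r0 Pr] := hP i; exists r.
have m0 : 0 < \big[Num.min/1]_i r i.
  by apply/bigmin_gtP; split=> // i _; case: (hr i).
exists (\big[Num.min/1]_i r i) => // i.
by case: (hr i) => _; apply => //; exact: bigmin_le.
Qed.

Lemma is_inf_unique {R : realType} (E : R -> Prop) (x0 : R) :
  (forall x, E x <-> x = x0) -> is_inf E x0.
Proof.
move=> hE; split=> [x /hE -> //|b hb]; exact/hb/hE.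
Qed.

Lemma interleaving_dist_le {R : realType} {X Y : finType} {TX : {set {set X}}}
  {TY : {set {set Y}}} {V : R -> {set {set X}}} {U : R -> {set {set Y}}} (e : R) :
  cf_interleaving TX TY V U e -> (interleaving_dist TX TY V U <= e%:E)%E.
Proof. by move=> hVU; apply: ereal_inf_lbound; exists e. Qed.

Section ShiftInterleaving.
Context {R : realType} {X : finType} {T : {set {set X}}}.
Implicit Types (V U : R -> {set {set X}}) (c e : R).

Lemma shift_morphism V U c : (forall s, refines (V s) (U (s + c))) ->
  cf_morphism T T V U (fun t => t + c) (fun _ => id).
Proof.
have preim_id (W : {set X}) : id @^-1: W = W by apply/setP => x; rewrite inE.
move=> hVU; split=> [s t|t W|t s <- W /hVU[W' UW' sW]]; first by rewrite lerD2r.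
  by rewrite preim_id.
by exists W' => //; rewrite -[W']preim_id; exact: imset_f.
Qed.

Lemma shift_interleaving {V U} c {e} : 0 <= c < e ->
  is_coarse_filt T V -> is_coarse_filt T U ->
  (forall s, refines (V s) (U (s + c))) -> (forall s, refines (U s) (V (s + c))) ->
  cf_interleaving T T V U e.
Proof.
case/andP=> c0 ce [_ monoV] [_ monoU] hVU hUV.
have inf_shift2 t : is_inf (fun x => x + c + c = t) (t - c - c).
  by apply: is_inf_unique => x; split=> [<-|->]; rewrite ?addrK ?subrK.
exists (fun t => t + c), (fun _ => id), (fun t => t + c), (fun _ => id); split.
- exact: shift_morphism.
- exact: shift_morphism.
- by move=> t; rewrite addrC addKr ger0_norm.
- by move=> t; exists (t - c - c); [exact: inf_shift2 | apply: monoV; lra].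
- by move=> t; exists (t - c - c); [exact: inf_shift2 | apply: monoU; lra].
Qed.

End ShiftInterleaving.

Section ConsistencyFiltration.
Context {R : realType} {X : finType} {T : {set {set X}}}.
Context {S : opens T -> Type} {d : forall U, S U -> S U -> R}.
Implicit Types (rho : restr_maps S) (a : assignment S) (c k t : R).

Lemma le_assign_dist (a b : assignment S) U : d U (a U) (b U) <= assign_dist d a b.
Proof. exact: (le_bigmax _ (fun U => d U (a U) (b U))). Qed.

Lemma cons_radius_ge0 rho a W : 0 <= cons_radius d rho a W.
Proof. exact: bigmax_ge_id. Qed.

Lemma cons_radius_le_perturb rho1 a1 rho2 a2 k : 0 <= k ->
  (forall V1 V2 : opens T, val V1 \subset val V2 ->
     d V1 (rho2 V1 V2 (a2 V2)) (a2 V1) <= d V1 (rho1 V1 V2 (a1 V2)) (a1 V1) + k) ->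
  forall W, cons_radius d rho2 a2 W <= cons_radius d rho1 a1 W + k.
Proof.
move=> k0 hk W; apply/bigmax_leP; split; first by rewrite addr_ge0 ?cons_radius_ge0.
case=> V1 V2 /= /andP[s12 s2W]; apply: le_trans (hk _ _ s12) _.
by rewrite lerD2r (le_bigmax_cond _ (j := (V1, V2))) //= s12.
Qed.

Lemma cons_radius_close {rho1 a1 rho2 a2 k} :
  (forall U, is_pseudometric (d U)) -> 0 <= k ->
  (forall V1 V2 : opens T, val V1 \subset val V2 ->
     d V1 (rho1 V1 V2 (a1 V2)) (rho2 V1 V2 (a2 V2)) + d V1 (a1 V1) (a2 V1) <= k) ->
  forall W, cons_radius d rho2 a2 W <= cons_radius d rho1 a1 W + k /\
            cons_radius d rho1 a1 W <= cons_radius d rho2 a2 W + k.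
Proof.
move=> hd k0 hk W; split; apply: cons_radius_le_perturb => // V1 V2 s12;
  have := hk _ _ s12; case: (hd V1) => _ dC _.
- have := pseudometric_le_shift (hd V1) (rho2 V1 V2 (a2 V2)) (a2 V1)
                                (rho1 V1 V2 (a1 V2)) (a1 V1).
  rewrite (dC (rho2 _ _ _) (rho1 _ _ _)) (dC (a2 V1)); lra.
- have := pseudometric_le_shift (hd V1) (rho1 V1 V2 (a1 V2)) (a1 V1)
                                (rho2 V1 V2 (a2 V2)) (a2 V1); lra.
Qed.

Lemma cf_M_sub rho a t : cf_M d rho a t \subset T.
Proof. by apply/subsetP => _ /imsetP[W _ ->]; exact: valP. Qed.

Lemma cf_M_maximal_above {rho a t} {W : opens T} : cons_radius d rho a W < t ->
  exists2 W' : opens T, val W \subset val W' & val W' \in cf_M d rho a t.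
Proof.
move=> rW.
pose P (W' : opens T) := (val W \subset val W') && (cons_radius d rho a W' < t).
have PW : P W by rewrite /P subxx rW.
have [W' /andP[sW rW'] maxW'] := arg_maxnP (fun W' : opens T => #|val W'|) PW.
exists W' => //; apply: imset_f; rewrite inE rW' /=.
apply/forallP => W''; apply/implyP => /andP[s' r'].
by rewrite eq_sym eqEcard s' /=; apply: maxW'; rewrite /P r' (subset_trans sW s').
Qed.

Lemma cf_M_refines_shift {rho1 a1 rho2 a2 c} :
  (forall W, cons_radius d rho2 a2 W <= cons_radius d rho1 a1 W + c) ->
  forall s, refines (cf_M d rho1 a1 s) (cf_M d rho2 a2 (s + c)).
Proof.
move=> hc s V /imsetP[W]; rewrite inE => /andP[rW _] ->.
have rW2 : cons_radius d rho2 a2 W < s + c.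
  by apply: le_lt_trans (hc W) _; rewrite ltrD2r.
by have [W' sW M'] := cf_M_maximal_above rW2; exists (val W').
Qed.

Lemma cf_M_coarse_filt rho a : is_coarse_filt T (cf_M d rho a).
Proof.
split=> [t|t t' tt']; first exact: cf_M_sub.
have shift W : cons_radius d rho a W <= cons_radius d rho a W + (t' - t).
  by rewrite lerDl subr_ge0.
by have := cf_M_refines_shift shift t; rewrite addrC subrK.
Qed.

Lemma restr_continuous_common_delta {rho} a {e : R} :
  (forall U V : opens T, val U \subset val V -> pm_continuous (d V) (d U) (rho U V)) ->
  0 < e -> exists2 del, 0 < del & forall V1 V2 : opens T, val V1 \subset val V2 ->
    forall y, d V2 (a V2) y < del -> d V1 (rho V1 V2 (a V2)) (rho V1 V2 y) < e.
Proof.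
move=> rho_cont e0.
pose P (p : opens T * opens T) r := val p.1 \subset val p.2 ->
  forall y, d p.2 (a p.2) y < r -> d p.1 (rho p.1 p.2 (a p.2)) (rho p.1 p.2 y) < e.
have [|del del0 hdel] := @common_positive_bound R _ P.
  case=> V1 V2; rewrite /P /=.
  have [s12|_] := boolP (val V1 \subset val V2); last by exists 1.
  have [r r0 hr] := rho_cont _ _ s12 (a V2) e e0.
  by exists r => // s _ sr _ y hy; apply: hr; exact: lt_le_trans hy sr.
by exists del => // V1 V2; exact: (hdel (V1, V2)).
Qed.

End ConsistencyFiltration.

Theorem theorem48 (R : realType) (X : finType) (T : {set {set X}})
  (HT : is_topology T)
  (S : opens T -> Type) (d : forall U, S U -> S U -> R)
  (Hd : forall U, is_pseudometric (d U)) :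
  (forall (rho : restr_maps S) (a : assignment S),
     is_sheaf_pm d rho -> is_coarse_filt T (cf_M d rho a)) /\
  (forall (rho : restr_maps S) (a : assignment S),
     is_sheaf_pm d rho ->
     forall eps : R, 0 < eps ->
     exists2 del : R, 0 < del &
       forall (rho' : restr_maps S) (a' : assignment S),
         is_sheaf_pm d rho' -> sheaf_iso rho rho' ->
         (forall U V : opens T, val U \subset val V ->
            forall x : S V, d U (rho U V x) (rho' U V x) < del) ->
         assign_dist d a a' < del ->
         (interleaving_dist T T (cf_M d rho a) (cf_M d rho' a') < eps%:E)%E).
Proof.
split=> [rho a _|rho a [_ _ rho_cont _] eps eps0]; first exact: cf_M_coarse_filt.
have eps8_gt0 : 0 < eps / 8 by lra.
have [del0 del0_gt0 near_a] := restr_continuous_common_delta a rho_cont eps8_gt0.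
set del := Num.min del0 (eps / 8).
have [del_gt0 del_le0 del_le] : [/\ 0 < del, del <= del0 & del <= eps / 8].
  by rewrite lt_min del0_gt0 !ge_min !lexx ?orbT.
exists del => // rho' a' _ _ close_rho close_a.
have close_a_at U : d U (a U) (a' U) < del.
  exact: le_lt_trans (le_assign_dist a a' U) close_a.
have gap (V1 V2 : opens T) : val V1 \subset val V2 ->
    d V1 (rho V1 V2 (a V2)) (rho' V1 V2 (a' V2)) + d V1 (a V1) (a' V1) <= 3 * eps / 8.
  move=> s12; case: (Hd V1) => _ _ dtr.
  have := dtr (rho V1 V2 (a V2)) (rho V1 V2 (a' V2)) (rho' V1 V2 (a' V2)).
  have := near_a _ _ s12 (a' V2) (lt_le_trans (close_a_at V2) del_le0).
  have := close_rho _ _ s12 (a' V2); have := close_a_at V1; lra.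
have c_ge0 : 0 <= 3 * eps / 8 by lra.
have radii := cons_radius_close Hd c_ge0 gap.
apply: le_lt_trans (interleaving_dist_le (eps / 2) _) _; last by rewrite lte_fin; lra.
apply: (shift_interleaving (3 * eps / 8)).
- by apply/andP; split; lra.
- exact: cf_M_coarse_filt.
- exact: cf_M_coarse_filt.
- exact: cf_M_refines_shift (fun W => proj1 (radii W)).
- exact: cf_M_refines_shift (fun W => proj2 (radii W)).
Qed.
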